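(* Let $n\ge2$, $A\in\mathbb{R}^{n\times d}$, $\mathcal{B}_d=\{\mathbf{w}\in\mathbb{R}^d:\|\mathbf{w}\|_2\le1\}$, and let $\alpha_t=1$. (MPFP.) Let $c=\sqrt{\log n}+\frac{1}{\sqrt2}$, $\alpha_{\mathbf{w}}=\frac{\sqrt{\log n}}{c}$, $\alpha_{\mathbf{p}}=\frac{1}{\sqrt{\log n}\,c}$, $\gamma_t=\frac1c$, and $R(\mathbf{w},\mathbf{p})=\alpha_{\mathbf{w}}\frac12\|\mathbf{w}\|_2^2+\alpha_{\mathbf{p}}E(\mathbf{p})$ on $\mathcal{Z}=\mathcal{B}_d\times\Delta^n$. Let $F(\mathbf{w},\mathbf{p})=[-A^{\top}\mathbf{p};A\mathbf{w}]\in\mathbb{R}^{d+n}$ and $\mathrm{Prox}^R_{\mathbf{v}}(\mathbf{z})=\arg\min_{\mathbf{u}\in\mathcal{Z}}\{\mathbf{u}^{\top}\mathbf{z}+D_R(\mathbf{u},\mathbf{v})\}$. Set $\mathbf{v}_1=[\mathbf{0};\tfrac{\mathbf{1}}{n}]$ and for $t=1,\dots,T$: $\mathbf{u}_t=\mathrm{Prox}^R_{\mathbf{v}_t}(\gamma_tF(\mathbf{v}_t))$, $\mathbf{v}_{t+1}=\mathrm{Prox}^R_{\mathbf{v}_t}(\gamma_tF(\mathbf{u}_t))$, $\mathbf{z}_t=\frac{\sum_{s=1}^t\gamma_s\mathbf{u}_s}{\sum_{s=1}^t\gamma_s}$. (Optimistic mirror descent dynamics.) $\widehat{\mathbf{w}}_0=\mathbf{0}$,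 $\widehat{\mathbf{p}}_0=\tfrac{\mathbf{1}}{n}$; for $t=1,\dots,T$: $\mathbf{w}_t=\arg\min_{\mathbf{w}\in\mathcal{B}_d}\frac{1}{\sqrt{\log n}}\langle-A^{\top}\widehat{\mathbf{p}}_{t-1},\mathbf{w}\rangle+\frac12\|\mathbf{w}-\widehat{\mathbf{w}}_{t-1}\|_2^2$, $\mathbf{p}_t=\arg\min_{\mathbf{p}\in\Delta^n}\sqrt{\log n}\langle A\widehat{\mathbf{w}}_{t-1},\mathbf{p}\rangle+D_E(\mathbf{p},\widehat{\mathbf{p}}_{t-1})$, $\widehat{\mathbf{w}}_t=\arg\min_{\mathbf{w}\in\mathcal{B}_d}\frac{1}{\sqrt{\log n}}\langle-A^{\top}\mathbf{p}_t,\mathbf{w}\rangle+\frac12\|\mathbf{w}-\widehat{\mathbf{w}}_{t-1}\|_2^2$, $\widehat{\mathbf{p}}_t=\arg\min_{\mathbf{p}\in\Delta^n}\sqrt{\log n}\langle A\mathbf{w}_t,\mathbf{p}\rangle+D_E(\mathbf{p},\widehat{\mathbf{p}}_{t-1})$. Then for every $t\in[T]$: $\mathbf{u}_t=[\mathbf{w}_t;\mathbf{p}_t]$, $\mathbf{v}_{t+1}=[\widehat{\mathbf{w}}_t;\widehat{\mathbf{p}}_t]$, and $\mathbf{z}_t=\big[\frac1t\sum_{s=1}^t\mathbf{w}_s;\frac1t\sum_{s=1}^t\mathbf{p}_s\big]$.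
   Context: $\Delta^n$ is the probability simplex; $\mathbf{1}$ the all-ones vector; $[\mathbf{x};\mathbf{y}]$ denotes concatenation. $E(\mathbf{p})=\sum_ip_i\log p_i$ is the negative entropy, $D_E(\mathbf{p},\mathbf{q})=\sum_ip_i\log(p_i/q_i)$ its Bregman divergence, and $D_R(\mathbf{u},\mathbf{v})=R(\mathbf{u})-R(\mathbf{v})-(\mathbf{u}-\mathbf{v})^{\top}\nabla R(\mathbf{v})$. MPFP is the mirror-prox feasibility algorithm of Yu, Kılınç-Karzan and Carbonell specialized to the bilinear objective $\mathbf{p}^{\top}A\mathbf{w}$. *)

From HB Require Import structures.
From mathcomp Require Import all_boot all_order all_algebra.
From mathcomp Require Import reals exp.
Set Implicit Arguments. Unset Strict Implicit. Unset Printing Implicit Defensive.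
Import Order.TTheory GRing.Theory Num.Theory.
Local Open Scope ring_scope.

Section Defs.
Variable R : realType.

Definition dot k (x y : 'cV[R]_k) : R := \sum_(i < k) x i 0 * y i 0.

Definition in_ball d (w : 'cV[R]_d) : Prop := dot w w <= 1.

Definition in_simplex n (p : 'cV[R]_n) : Prop :=
  (forall i, 0 <= p i 0) /\ \sum_(i < n) p i 0 = 1.

Definition unif n : 'cV[R]_n := const_mx (n%:R)^-1.

(* negative entropy E(p) = sum p_i log p_i  (ln 0 = 0, so 0 log 0 = 0) *)
Definition negent n (p : 'cV[R]_n) : R := \sum_(i < n) p i 0 * ln (p i 0).

(* its gradient, coordinates log p_i + 1 (used only at interior points) *)
Definition grad_negent n (p : 'cV[R]_n) : 'cV[R]_n :=
  \col_i (ln (p i 0) + 1).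

Definition DE n (p q : 'cV[R]_n) : R :=
  \sum_(i < n) p i 0 * ln (p i 0 / q i 0).

Definition is_argmin T (S : T -> Prop) (f : T -> R) (x : T) : Prop :=
  S x /\ forall y, S y -> f x <= f y.

Definition in_Z d n (z : 'cV[R]_(d + n)) : Prop :=
  in_ball (usubmx z) /\ in_simplex (dsubmx z).

Definition Rreg d n (aw ap : R) (z : 'cV[R]_(d + n)) : R :=
  aw * (2^-1 * dot (usubmx z) (usubmx z)) + ap * negent (dsubmx z).

Definition grad_Rreg d n (aw ap : R) (z : 'cV[R]_(d + n)) : 'cV[R]_(d + n) :=
  col_mx (aw *: usubmx z) (ap *: grad_negent (dsubmx z)).

Definition DR d n (aw ap : R) (u v : 'cV[R]_(d + n)) : R :=
  Rreg aw ap u - Rreg aw ap v - dot (u - v) (grad_Rreg aw ap v).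

Definition Fop d n (A : 'M[R]_(n, d)) (z : 'cV[R]_(d + n)) : 'cV[R]_(d + n) :=
  col_mx (- (A^T *m dsubmx z)) (A *m usubmx z).

Definition is_prox d n (aw ap : R) (v g u : 'cV[R]_(d + n)) : Prop :=
  is_argmin (@in_Z d n) (fun x => dot x g + DR aw ap x v) u.

End Defs.

(* For a block point [x; q] with q in the simplex and an interior base point
   [y; r], the Bregman divergence of R splits as
   a_w |x - y|^2 / 2 + a_p D_E(q, r), and the linear term <[x; q], gam F(v)>
   splits likewise.  With a_w = s/c, a_p = 1/(s c) and gam = 1/c, where
   s = sqrt(log n), the prox objective on B_d x Delta^n is therefore
   (s/c) h(x) + (1/(s c)) k(q) for the two optimistic mirror descent
   objectives h and k, so the prox point is the pair of their minimizers.
   Both are unique: h is strictly convex on the ball, and up to a constant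
   k(q) = D_E(q, gibbs) with gibbs_i proportional to r_i exp(-s (A w)_i), so
   by Gibbs' inequality gibbs is its only minimizer.  The Gibbs point is again
   interior, which carries the induction over t.  As the step size is
   constant, the weighted average z_t is the plain average. *)

From HB Require Import structures.
From mathcomp Require Import all_boot all_order all_algebra.
From mathcomp Require Import reals exp.
From mathcomp Require Import sequences ring lra.
Set Implicit Arguments. Unset Strict Implicit. Unset Printing Implicit Defensive.
Import Order.TTheory GRing.Theory Num.Theory.
Local Open Scope ring_scope.

Section InnerProduct.
Variable R : realType.

Lemma dotC k (a b : 'cV[R]_k) : dot a b = dot b a.
Proof. by apply: eq_bigr => i _; rewrite mulrC. Qed.

Lemma dotDl k (a b c : 'cV[R]_k) : dot (a + b) c = dot a c + dot b c.
Proof. by rewrite /dot -big_split; apply: eq_bigr => i _; rewrite !mxE mulrDl. Qed.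

Lemma dotNl k (a c : 'cV[R]_k) : dot (- a) c = - dot a c.
Proof. by rewrite /dot -sumrN; apply: eq_bigr => i _; rewrite !mxE mulNr. Qed.

Lemma dotZl k x (a c : 'cV[R]_k) : dot (x *: a) c = x * dot a c.
Proof. by rewrite /dot mulr_sumr; apply: eq_bigr => i _; rewrite !mxE mulrA. Qed.

Lemma dotDr k (a b c : 'cV[R]_k) : dot c (a + b) = dot c a + dot c b.
Proof. by rewrite dotC dotDl !(dotC c). Qed.

Lemma dotNr k (a c : 'cV[R]_k) : dot c (- a) = - dot c a.
Proof. by rewrite dotC dotNl dotC. Qed.

Lemma dotZr k x (a c : 'cV[R]_k) : dot c (x *: a) = x * dot c a.
Proof. by rewrite dotC dotZl dotC. Qed.

Lemma dot_col_mx m k (a c : 'cV[R]_m) (b e : 'cV[R]_k) :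
  dot (col_mx a b) (col_mx c e) = dot a c + dot b e.
Proof.
rewrite /dot big_split_ord /=.
by congr (_ + _); apply: eq_bigr => i _; rewrite ?col_mxEu ?col_mxEd.
Qed.

Lemma dot_ge0 k (a : 'cV[R]_k) : 0 <= dot a a.
Proof. by apply: sumr_ge0 => i _; rewrite -expr2 sqr_ge0. Qed.

Lemma dot_eq0 k (a : 'cV[R]_k) : dot a a = 0 -> a = 0.
Proof.
have sq_ge0 i : 0 <= a i 0 * a i 0 by rewrite -expr2 sqr_ge0.
move=> /(psumr_eq0P (fun i _ => sq_ge0 i)) a0.
apply/matrixP => i j; rewrite (ord1 j) mxE.
by apply/eqP; rewrite -sqrf_eq0 expr2 (a0 i).
Qed.

Lemma dot_midpoint k (a b : 'cV[R]_k) :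
  dot (2^-1 *: (a + b)) (2^-1 *: (a + b)) =
  2^-1 * (dot a a + dot b b) - 4^-1 * dot (a - b) (a - b).
Proof.
rewrite !(dotZl, dotZr, dotDl, dotDr, dotNl, dotNr) (dotC b a).
by field.
Qed.

End InnerProduct.

Section Ball.
Variable R : realType.

Lemma in_ball_midpoint d (a b : 'cV[R]_d) :
  in_ball a -> in_ball b -> in_ball (2^-1 *: (a + b)).
Proof. by rewrite /in_ball dot_midpoint; have := dot_ge0 (a - b); lra. Qed.

Lemma argmin_quad_uniq d (S : 'cV[R]_d -> Prop) (k : R) (b y x1 x2 : 'cV[R]_d) :
  (forall a c, S a -> S c -> S (2^-1 *: (a + c))) ->
  let h x := k * dot b x + 2^-1 * dot (x - y) (x - y) in
  is_argmin S h x1 -> is_argmin S h x2 -> x1 = x2.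
Proof.
move=> S_mid h [S1 min1] [S2 min2].
set m := 2^-1 *: (x1 + x2).
have h_mid : h m = 2^-1 * (h x1 + h x2) - 8^-1 * dot (x1 - x2) (x1 - x2).
  have my : m - y = 2^-1 *: ((x1 - y) + (x2 - y)).
    by apply/matrixP => i j; rewrite !mxE; field.
  rewrite /h my dot_midpoint.
  have -> : x1 - y - (x2 - y) = x1 - x2 by rewrite opprB addrA subrK.
  by rewrite /m dotZr dotDr; field.
have := min1 _ (S_mid _ _ S1 S2); have := min1 _ S2; have := min2 _ S1.
rewrite h_mid; have := dot_ge0 (x1 - x2) => ge0 le21 le12 lem.
apply/eqP; rewrite -subr_eq0; apply/eqP/dot_eq0; lra.
Qed.
End Ball.

Section Simplex.
Variable R : realType.

Definition in_open_simplex n (r : 'cV[R]_n) : Prop :=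
  (forall i, 0 < r i 0) /\ \sum_(i < n) r i 0 = 1.

Lemma open_simplex_simplex n (r : 'cV[R]_n) : in_open_simplex r -> in_simplex r.
Proof. by case=> r_gt0 r1; split=> // i; exact: ltW. Qed.

Lemma unif_open_simplex n : (0 < n)%N -> in_open_simplex (unif R n).
Proof.
move=> n_gt0; have n_neq0 : (n%:R : R) != 0 by rewrite pnatr_eq0 -lt0n.
split=> [i|]; first by rewrite mxE invr_gt0 ltr0n.
under eq_bigr do rewrite mxE.
by rewrite sumr_const card_ord -[_ *+ n]mulr_natr mulVf.
Qed.

(* With l = ln (q / r) we have r = q exp(-l), so the right-hand side is
   nonnegative by exp x >= 1 + x, with equality only at l = 0. *)
Lemma mul_ln_div_sub (q r : R) : 0 < q -> 0 < r ->
  q * ln (q / r) - (q - r) = q * (expR (- ln (q / r)) - (1 - ln (q / r))).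
Proof.
move=> q_gt0 r_gt0.
rewrite expRN lnK ?posrE ?divr_gt0 // invf_div mulrBr mulrBr mulrCA divff ?gt_eqF //.
by ring.
Qed.

Lemma sub_le_mul_ln_div (q r : R) : 0 <= q -> 0 < r -> q - r <= q * ln (q / r).
Proof.
rewrite le0r => /orP[/eqP-> | q_gt0] r_gt0; first by rewrite mul0r; lra.
rewrite -subr_ge0 mul_ln_div_sub //; apply: mulr_ge0; first exact: ltW.
by rewrite subr_ge0 expR_ge1Dx.
Qed.

Lemma mul_ln_div_eq_sub (q r : R) : 0 <= q -> 0 < r ->
  q * ln (q / r) = q - r -> q = r.
Proof.
rewrite le0r => /orP[/eqP-> | q_gt0] r_gt0; first by rewrite mul0r; lra.
move=> /eqP; rewrite -subr_eq0 mul_ln_div_sub // mulf_eq0 gt_eqF //= subr_eq0.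
have [/eqP | ln_neq0] := eqVneq (ln (q / r)) 0.
  rewrite ln_eq0 ?divr_gt0 // => /eqP /(congr1 ( *%R^~ r)) + _.
  by rewrite mul1r divfK ?gt_eqF.
by rewrite gt_eqF // expR_gt1Dx // oppr_eq0.
Qed.

Lemma DE_psum n (q r : 'cV[R]_n) : in_simplex q -> in_simplex r ->
  DE q r = \sum_(i < n) (q i 0 * ln (q i 0 / r i 0) - (q i 0 - r i 0)).
Proof. by move=> [_ q1] [_ r1]; rewrite sumrB sumrB q1 r1 subrr subr0. Qed.

Lemma DE_ge0 n (q r : 'cV[R]_n) : in_simplex q -> in_open_simplex r -> 0 <= DE q r.
Proof.
move=> qS rS; have [q_ge0 _] := qS; have [r_gt0 _] := rS.
rewrite (DE_psum qS (open_simplex_simplex rS)).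
by apply: sumr_ge0 => i _; rewrite subr_ge0 sub_le_mul_ln_div.
Qed.

Lemma DE_eq0 n (q r : 'cV[R]_n) : in_simplex q -> in_open_simplex r ->
  DE q r = 0 -> q = r.
Proof.
move=> qS rS; have [q_ge0 _] := qS; have [r_gt0 _] := rS.
have gap_ge0 i : true -> 0 <= q i 0 * ln (q i 0 / r i 0) - (q i 0 - r i 0).
  by rewrite subr_ge0 sub_le_mul_ln_div.
rewrite (DE_psum qS (open_simplex_simplex rS)) => /(psumr_eq0P gap_ge0) gap0.
apply/matrixP => i j; rewrite (ord1 j); apply: mul_ln_div_eq_sub => //.
by apply/eqP; rewrite -subr_eq0 gap0.
Qed.

Lemma bregman_negent n (q r : 'cV[R]_n) : in_simplex q -> in_open_simplex r ->
  negent q - negent r - dot (q - r) (grad_negent r) = DE q r.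
Proof.
move=> qS rS; have [q_ge0 _] := qS; have [r_gt0 _] := rS.
rewrite (DE_psum qS (open_simplex_simplex rS)) /negent /dot -!sumrB.
apply: eq_bigr => i _; rewrite !mxE.
have [-> | q_neq0] := eqVneq (q i 0) 0; first by rewrite !mul0r; ring.
have q_gt0 : 0 < q i 0 by rewrite lt0r q_neq0 q_ge0.
by rewrite ln_div ?posrE //; ring.
Qed.

Definition tilt n (k : R) (b r : 'cV[R]_n) : 'cV[R]_n :=
  \col_i (r i 0 * expR (- (k * b i 0))).

Definition gibbs n (k : R) (b r : 'cV[R]_n) : 'cV[R]_n :=
  (\sum_(i < n) tilt k b r i 0)^-1 *: tilt k b r.

Lemma sum_tilt_gt0 n k (b r : 'cV[R]_n) : in_open_simplex r ->
  0 < \sum_(i < n) tilt k b r i 0.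
Proof.
case: n b r => [|n] b r [r_gt0 r1]; first by move: r1; rewrite big_ord0; lra.
rewrite big_ord_recl ltr_wpDr ?sumr_ge0 // => [i _|]; rewrite mxE.
  by rewrite ltW // mulr_gt0 ?expR_gt0.
by rewrite mulr_gt0 ?expR_gt0.
Qed.

Lemma gibbs_open_simplex n k (b r : 'cV[R]_n) : in_open_simplex r ->
  in_open_simplex (gibbs k b r).
Proof.
move=> rS; have Z_gt0 := sum_tilt_gt0 k b rS; have [r_gt0 _] := rS.
split=> [i|]; first by rewrite !mxE mulr_gt0 ?invr_gt0 ?mulr_gt0 ?expR_gt0.
under eq_bigr do rewrite mxE.
by rewrite -mulr_sumr mulVf ?gt_eqF.
Qed.

Lemma entropic_objective_gibbs n k (b q r : 'cV[R]_n) :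
  in_simplex q -> in_open_simplex r ->
  k * dot b q + DE q r = DE q (gibbs k b r) - ln (\sum_(i < n) tilt k b r i 0).
Proof.
move=> [q_ge0 q1] rS; have Z_gt0 := sum_tilt_gt0 k b rS; have [r_gt0 _] := rS.
rewrite -[ln _]mulr1 -q1 mulr_sumr /dot /DE mulr_sumr -big_split -sumrB.
apply: eq_bigr => i _ /=.
have [-> | q_neq0] := eqVneq (q i 0) 0; first by rewrite !(mulr0, mul0r) subr0 addr0.
have q_gt0 : 0 < q i 0 by rewrite lt0r q_neq0 q_ge0.
rewrite !mxE !ln_div ?posrE ?mulr_gt0 ?invr_gt0 ?expR_gt0 // [_^-1 * _]mulrC.
by rewrite ln_div ?lnM ?posrE ?mulr_gt0 ?expR_gt0 // expRK; ring.
Qed.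

Lemma simplex_argmin_gibbs n k (b r q : 'cV[R]_n) : in_open_simplex r ->
  is_argmin (@in_simplex R n) (fun x => k * dot b x + DE x r) q -> q = gibbs k b r.
Proof.
move=> rS [qS q_min]; have gS := gibbs_open_simplex k b rS.
have := q_min _ (open_simplex_simplex gS).
rewrite !entropic_objective_gibbs ?lerD2r //; last exact: open_simplex_simplex.
have [g_gt0 _] := gS.
have -> : DE (gibbs k b r) (gibbs k b r) = 0.
  by apply: big1 => i _; rewrite divff ?gt_eqF // ln1 mulr0.
by move=> DE_le0; apply: DE_eq0 => //; apply/le_anti; rewrite DE_le0 DE_ge0.
Qed.
End Simplex.

Section Prox.
Variable R : realType.

Lemma DR_col_mx d n (aw ap : R) (x y : 'cV[R]_d) (q r : 'cV[R]_n) :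
  in_simplex q -> in_open_simplex r ->
  DR aw ap (col_mx x q) (col_mx y r) =
    aw * (2^-1 * dot (x - y) (x - y)) + ap * DE q r.
Proof.
move=> qS rS; rewrite -(bregman_negent qS rS).
rewrite /DR /Rreg /grad_Rreg !col_mxKu !col_mxKd opp_col_mx add_col_mx dot_col_mx.
by rewrite !dotZr !(dotDl, dotDr, dotNl, dotNr) (dotC y x); field.
Qed.

Lemma argmin_col_mx d n (S1 : 'cV[R]_d -> Prop) (S2 : 'cV[R]_n -> Prop)
    (f : 'cV[R]_(d + n) -> R) (h : 'cV[R]_d -> R) (g : 'cV[R]_n -> R)
    (a b : R) (U : 'cV[R]_(d + n)) :
  0 < a -> 0 < b ->
  (forall x q, S1 x -> S2 q -> f (col_mx x q) = a * h x + b * g q) ->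
  is_argmin (fun z => S1 (usubmx z) /\ S2 (dsubmx z)) f U ->
  is_argmin S1 h (usubmx U) /\ is_argmin S2 g (dsubmx U).
Proof.
move=> a_gt0 b_gt0 f_sep [[S1U S2U] U_min].
have fU : f U = a * h (usubmx U) + b * g (dsubmx U) by rewrite -f_sep ?vsubmxK.
split; split=> //.
- move=> x S1x; have := U_min (col_mx x (dsubmx U)); rewrite col_mxKu col_mxKd fU f_sep //.
  by rewrite lerD2r ler_pM2l //; apply.
- move=> q S2q; have := U_min (col_mx (usubmx U) q); rewrite col_mxKu col_mxKd fU f_sep //.
  by rewrite lerD2l ler_pM2l //; apply.
Qed.

Lemma prox_Fop_col_mx d n (A : 'M[R]_(n, d)) (s c : R) (y ws x0 : 'cV[R]_d)
    (r ps q0 : 'cV[R]_n) (U : 'cV[R]_(d + n)) :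
  0 < s -> 0 < c -> in_open_simplex r ->
  is_prox (s / c) ((s * c)^-1) (col_mx y r) (c^-1 *: Fop A (col_mx ws ps)) U ->
  is_argmin (@in_ball R d)
    (fun x => s^-1 * dot (- (A^T *m ps)) x + 2^-1 * dot (x - y) (x - y)) x0 ->
  is_argmin (@in_simplex R n) (fun q => s * dot (A *m ws) q + DE q r) q0 ->
  U = col_mx x0 q0.
Proof.
move=> s_gt0 c_gt0 rS U_prox x0_min q0_min.
pose h x := s^-1 * dot (- (A^T *m ps)) x + 2^-1 * dot (x - y) (x - y).
pose g q := s * dot (A *m ws) q + DE q r.
have prox_sep x q : in_ball x -> in_simplex q ->
    dot (col_mx x q) (c^-1 *: Fop A (col_mx ws ps))
      + DR (s / c) ((s * c)^-1) (col_mx x q) (col_mx y r)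
    = s / c * h x + (s * c)^-1 * g q.
  move=> _ qS; rewrite DR_col_mx // /Fop !col_mxKu !col_mxKd scale_col_mx.
  rewrite dot_col_mx !dotZr /h /g (dotC x) (dotC q) !dotNl.
  by field; rewrite ?gt_eqF.
have aw_gt0 : 0 < s / c by rewrite divr_gt0.
have ap_gt0 : 0 < (s * c)^-1 by rewrite invr_gt0 mulr_gt0.
have [U1_min U2_min] := argmin_col_mx aw_gt0 ap_gt0 prox_sep U_prox.
rewrite -(vsubmxK U) (argmin_quad_uniq (@in_ball_midpoint R d) U1_min x0_min).
by rewrite (simplex_argmin_gibbs rS U2_min) (simplex_argmin_gibbs rS q0_min).
Qed.
End Prox.

Lemma sum_col_mx (K : nmodType) m1 m2 (I : Type) (r : seq I) (P : pred I)
    (F : I -> 'cV[K]_m1) (G : I -> 'cV[K]_m2) :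
  \sum_(i <- r | P i) col_mx (F i) (G i) =
  col_mx (\sum_(i <- r | P i) F i) (\sum_(i <- r | P i) G i).
Proof.
apply: (big_rec3 (fun a b c => a = col_mx b c)) => [|i a b c _ ->].
  by rewrite col_mx0.
by rewrite add_col_mx.
Qed.

Lemma mean_const_weight (K : numFieldType) (V : lmodType K) (gam : K)
    (X : nat -> V) t :
  gam != 0 -> (0 < t)%N ->
  (\sum_(1 <= s < t.+1) gam)^-1 *: \sum_(1 <= s < t.+1) (gam *: X s) =
  (t%:R)^-1 *: \sum_(1 <= s < t.+1) X s.
Proof.
move=> gam_neq0 t_gt0; have t_neq0 : (t%:R : K) != 0 by rewrite pnatr_eq0 -lt0n.
rewrite sumr_const_nat subn1 /= -scaler_sumr scalerA -mulr_natr.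
by congr (_ *: _); field; rewrite ?t_neq0 ?gam_neq0.
Qed.

Section OptimisticMirrorDescent.
Variable R : realType.
Variables (d n T : nat) (A : 'M[R]_(n, d)) (s c : R).
Hypotheses (s_gt0 : 0 < s) (c_gt0 : 0 < c).
Variables (u v : nat -> 'cV[R]_(d + n)) (w what : nat -> 'cV[R]_d).
Variables (p phat : nat -> 'cV[R]_n).
Hypothesis v1 : v 1%N = col_mx (what 0%N) (phat 0%N).
Hypothesis phat0 : in_open_simplex (phat 0%N).
Hypothesis u_prox : forall t, (1 <= t <= T)%N ->
  is_prox (s / c) ((s * c)^-1) (v t) (c^-1 *: Fop A (v t)) (u t).
Hypothesis v_prox : forall t, (1 <= t <= T)%N ->
  is_prox (s / c) ((s * c)^-1) (v t) (c^-1 *: Fop A (u t)) (v t.+1).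
Hypothesis w_min : forall t, (1 <= t <= T)%N ->
  is_argmin (@in_ball R d)
    (fun x => s^-1 * dot (- (A^T *m phat t.-1)) x
              + 2^-1 * dot (x - what t.-1) (x - what t.-1)) (w t).
Hypothesis p_min : forall t, (1 <= t <= T)%N ->
  is_argmin (@in_simplex R n)
    (fun q => s * dot (A *m what t.-1) q + DE q (phat t.-1)) (p t).
Hypothesis what_min : forall t, (1 <= t <= T)%N ->
  is_argmin (@in_ball R d)
    (fun x => s^-1 * dot (- (A^T *m p t)) x
              + 2^-1 * dot (x - what t.-1) (x - what t.-1)) (what t).
Hypothesis phat_min : forall t, (1 <= t <= T)%N ->
  is_argmin (@in_simplex R n)
    (fun q => s * dot (A *m w t) q + DE q (phat t.-1)) (phat t).

Lemma mpfp_step t : (1 <= t <= T)%N ->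
  v t = col_mx (what t.-1) (phat t.-1) -> in_open_simplex (phat t.-1) ->
  u t = col_mx (w t) (p t) /\ v t.+1 = col_mx (what t) (phat t).
Proof.
move=> tT vt phatS.
have ut : u t = col_mx (w t) (p t).
  apply: (prox_Fop_col_mx s_gt0 c_gt0 phatS _ (w_min tT) (p_min tT)).
  by rewrite -vt; apply: u_prox.
split=> //; apply: (prox_Fop_col_mx s_gt0 c_gt0 phatS _ (what_min tT) (phat_min tT)).
by rewrite -vt -ut; apply: v_prox.
Qed.

Lemma mpfp_iterates t : (1 <= t <= T)%N ->
  [/\ u t = col_mx (w t) (p t), v t.+1 = col_mx (what t) (phat t)
    & in_open_simplex (phat t)].
Proof.
elim: t => [//|t IH] /andP[_ tT].
have [vt phatS] : v t.+1 = col_mx (what t) (phat t) /\ in_open_simplex (phat t).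
  case: t IH tT => [|t] IH tT; first by [].
  by have [] := IH (ltnW tT).
have tT' : (1 <= t.+1 <= T)%N by [].
have [ut vt1] := mpfp_step tT' vt phatS.
split=> //; rewrite (simplex_argmin_gibbs phatS (phat_min tT')).
exact: gibbs_open_simplex.
Qed.
End OptimisticMirrorDescent.

Theorem theorem8 (R : realType) (n d T : nat) (hn : (2 <= n)%N)
  (A : 'M[R]_(n, d))
  (u v z : nat -> 'cV[R]_(d + n))
  (w what : nat -> 'cV[R]_d) (p phat : nat -> 'cV[R]_n) :
  let L := ln (n%:R : R) in
  let c := Num.sqrt L + (Num.sqrt 2)^-1 in
  let aw := Num.sqrt L / c in
  let ap := (Num.sqrt L * c)^-1 in
  let gam := c^-1 in
  (* MPFP *)
  v 1%N = col_mx 0 (unif R n) ->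
  (forall t, (1 <= t <= T)%N -> is_prox aw ap (v t) (gam *: Fop A (v t)) (u t)) ->
  (forall t, (1 <= t <= T)%N -> is_prox aw ap (v t) (gam *: Fop A (u t)) (v t.+1)) ->
  (forall t, (1 <= t <= T)%N ->
     z t = (\sum_(1 <= s < t.+1) gam)^-1 *: \sum_(1 <= s < t.+1) (gam *: u s)) ->
  (* optimistic mirror descent *)
  what 0%N = 0 -> phat 0%N = unif R n ->
  (forall t, (1 <= t <= T)%N ->
     is_argmin (@in_ball R d)
       (fun x => (Num.sqrt L)^-1 * dot (- (A^T *m phat t.-1)) x
                 + 2^-1 * dot (x - what t.-1) (x - what t.-1)) (w t)) ->
  (forall t, (1 <= t <= T)%N ->
     is_argmin (@in_simplex R n)
       (fun q => Num.sqrt L * dot (A *m what t.-1) q + DE q (phat t.-1)) (p t)) ->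
  (forall t, (1 <= t <= T)%N ->
     is_argmin (@in_ball R d)
       (fun x => (Num.sqrt L)^-1 * dot (- (A^T *m p t)) x
                 + 2^-1 * dot (x - what t.-1) (x - what t.-1)) (what t)) ->
  (forall t, (1 <= t <= T)%N ->
     is_argmin (@in_simplex R n)
       (fun q => Num.sqrt L * dot (A *m w t) q + DE q (phat t.-1)) (phat t)) ->
  forall t, (1 <= t <= T)%N ->
    [/\ u t = col_mx (w t) (p t),
        v t.+1 = col_mx (what t) (phat t) &
        z t = col_mx ((t%:R)^-1 *: \sum_(1 <= s < t.+1) w s)
                     ((t%:R)^-1 *: \sum_(1 <= s < t.+1) p s)].
Proof.
move=> L c aw ap gam v1 u_prox v_prox z_mean what0 phat0 w_min p_min what_min
  phat_min t tT.
have sL_gt0 : 0 < Num.sqrt L by rewrite sqrtr_gt0 ln_gt0 // ltr1n.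
have c_gt0 : 0 < c by rewrite addr_gt0 // invr_gt0 sqrtr_gt0.
have phat0S : in_open_simplex (phat 0%N).
  by rewrite phat0; apply: unif_open_simplex; apply: leq_trans hn.
have v1E : v 1%N = col_mx (what 0%N) (phat 0%N) by rewrite what0 phat0.
have iterates := mpfp_iterates sL_gt0 c_gt0 v1E phat0S u_prox v_prox
  w_min p_min what_min phat_min.
have [ut vt _] := iterates t tT; split=> //.
have [t_gt0 t_le_T] := andP tT.
have u_sum : \sum_(1 <= s < t.+1) u s = \sum_(1 <= s < t.+1) col_mx (w s) (p s).
  apply: eq_big_nat => s /andP[s_ge1 s_le_t].
  by have [] // := iterates s; rewrite s_ge1 (leq_trans _ t_le_T) // -ltnS.
rewrite z_mean // mean_const_weight ?invr_neq0 ?gt_eqF //.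
by rewrite u_sum sum_col_mx scale_col_mx.
Qed.
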